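(* Let $G=(V,E)$ be a finite connected graph with $n=|V|\ge 2$ vertices, distance matrix $D$, and diameter $L=\mathrm{diam}(G)$. Let $K\in\mathbb{R}_{\ge 0}^n$ be any solution of $DK=n\mathbf{1}_n$. Then $$\min_i K_i\cdot \mathrm{diam}(G)\le 2,$$ i.e. $\mathrm{diam}(G)\le 2/\min_iK_i$ whenever $\min_i K_i>0$. Moreover, if $\min_i K_i=2/L$, then $K_i=2/L$ for all $i$ (the solution is constant).
   Context: All graphs are finite, simple, connected and undirected, with the combinatorial shortest-path distance $d$. For $V=\{v_1,\dots,v_n\}$, $D=(d(v_i,v_j))_{i,j=1}^n$ is the distance matrix and $\mathbf{1}_n$ the all-ones column vector of length $n$. *)

From HB Require Import structures.
From mathcomp Require Import all_boot all_order all_algebra.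
Set Implicit Arguments. Unset Strict Implicit. Unset Printing Implicit Defensive.
Import Order.TTheory GRing.Theory Num.Theory.

Definition simple_graph (T : finType) (e : rel T) : Prop :=
  symmetric e /\ irreflexive e.

Definition connected_graph (T : finType) (e : rel T) : Prop :=
  forall x y : T, connect e x y.

(* Shortest-path distance: the least k < #|T| such that there is a walk
   x = p_0, p_1, ..., p_k = y with consecutive vertices adjacent
   (a shortest walk in a connected graph has length < #|T|);
   the default #|T| is only reached for disconnected pairs. *)
Definition gdist (T : finType) (e : rel T) (x y : T) : nat :=
  \big[minn/#|T|]_(k < #|T| | [exists p : k.-tuple T, path e x p && (last x p == y)]) k.

Definition gdiam (T : finType) (e : rel T) : nat :=
  \max_(x : T) \max_(y : T) gdist e x y.

Definition vmin (R : realFieldType) (T : finType) (K : T -> R) : R :=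
  match [pick x : T] with
  | Some x0 => \big[Num.min/K x0]_(i : T) K i
  | None => 0
  end.

(* Take two vertices u, v at distance L = diam(G).  Adding the rows u and v of
   DK = n1 gives 2n = sum_j (d(u,j) + d(v,j)) K_j >= L sum_j K_j >= L n min_i K_i,
   by the triangle inequality d(u,j) + d(j,v) >= d(u,v).  If min_i K_i = 2/L every
   inequality is tight, so sum_j K_j = n min_i K_i and K is constant.  Only the
   symmetry and the triangle inequality of d are used. *)
From mathcomp Require Import all_boot all_order all_algebra.
From mathcomp Require Import lra.
Set Implicit Arguments. Unset Strict Implicit. Unset Printing Implicit Defensive.
Import Order.TTheory GRing.Theory Num.Theory.

Section ShortestPathDistance.
Variables (T : finType) (e : rel T).

Lemma gdist_le_card x y : (gdist e x y <= #|T|)%N.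
Proof. by rewrite /gdist -minEnat -leEnat bigmin_le_id. Qed.

Lemma gdist_le_size x y p : path e x p -> last x p = y -> (gdist e x y <= size p)%N.
Proof.
move=> e_p p_y; have [p_small|] := ltnP (size p) #|T|; last first.
  exact: leq_trans (gdist_le_card x y).
rewrite /gdist -minEnat -leEnat.
rewrite (bigmin_le_cond _ (fun k : 'I_#|T| => nat_of_ord k) (j := Ordinal p_small)) //.
by apply/existsP; exists (Tuple (eqxx (size p))); rewrite /= e_p p_y eqxx.
Qed.

Lemma gdist_witness x y : (gdist e x y < #|T|)%N ->
  exists p, [/\ path e x p, last x p = y & size p = gdist e x y].
Proof.
rewrite /gdist -minEnat.
set P := fun k : 'I_#|T| => [exists p : k.-tuple T, path e x p && (last x p == y)].
have [j Pj | noP] := pickP P; last by rewrite big_pred0 // ltnn.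
rewrite (bigmin_eq_arg _ _ _ _ Pj) => [_ | i _]; last exact: ltnW.
case: arg_minP => // k /existsP[p /andP[e_p /eqP p_y]] _.
by exists p; rewrite size_tuple.
Qed.

Lemma gdist_triangle x y z : (gdist e x z <= gdist e x y + gdist e y z)%N.
Proof.
have [xy_big|xy_small] := leqP #|T| (gdist e x y).
  exact: leq_trans (gdist_le_card _ _) (leq_trans xy_big (leq_addr _ _)).
have [yz_big|yz_small] := leqP #|T| (gdist e y z).
  exact: leq_trans (gdist_le_card _ _) (leq_trans yz_big (leq_addl _ _)).
have [p [e_p p_y <-]] := gdist_witness xy_small.
have [q [e_q q_z <-]] := gdist_witness yz_small.
by rewrite -size_cat; apply: gdist_le_size; rewrite ?cat_path ?last_cat p_y ?e_p ?e_q.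
Qed.

Lemma gdist_sym : symmetric e -> forall x y, gdist e x y = gdist e y x.
Proof.
move=> e_sym; suff gdist_sym_le x y : (gdist e y x <= gdist e x y)%N.
  by move=> x y; apply/eqP; rewrite eqn_leq !gdist_sym_le.
have [|xy_small] := leqP #|T| (gdist e x y); first exact: leq_trans (gdist_le_card _ _).
have [p [e_p p_y <-]] := gdist_witness xy_small.
rewrite -(size_belast x p) -size_rev; apply: gdist_le_size.
  by rewrite -p_y rev_path (@eq_path _ _ e) // => a b; rewrite /= e_sym.
by rewrite -p_y; case/lastP: p {e_p p_y} => // q z; rewrite belast_rcons rev_cons last_rcons.
Qed.

Lemma gdist_le_gdiam x y : (gdist e x y <= gdiam e)%N.
Proof. exact: leq_trans (leq_bigmax (F := gdist e x) y) (leq_bigmax x). Qed.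

Lemma gdiam_attained : (0 < #|T|)%N -> exists u v, gdiam e = gdist e u v.
Proof.
move=> T_gt0; have [u diam_u] := bigop.eq_bigmax (fun x => \max_y gdist e x y) T_gt0.
have [v diam_uv] := bigop.eq_bigmax (gdist e u) T_gt0.
by exists u, v; rewrite /gdiam diam_u diam_uv.
Qed.

End ShortestPathDistance.

Local Open Scope ring_scope.

Section MinimumOfVector.
Variables (R : realFieldType) (T : finType) (K : T -> R).

Lemma vmin_le i : vmin K <= K i.
Proof. by rewrite /vmin; case: pickP => [x0 _ | /(_ i)//]; apply: bigmin_le. Qed.

Lemma card_mul_vmin_le_sum : #|T|%:R * vmin K <= \sum_j K j.
Proof.
have -> : #|T|%:R * vmin K = \sum_(j : T) vmin K by rewrite sumr_const mulr_natl.
by apply: ler_sum => j _; apply: vmin_le.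
Qed.

Lemma eq_lower_bound_of_sum_le m : (forall j, m <= K j) ->
  \sum_j K j <= #|T|%:R * m -> forall i, K i = m.
Proof.
move=> m_le sum_le i; apply/eqP; rewrite -subr_eq0; apply/eqP.
have Km_ge0 j : true -> 0 <= K j - m by rewrite subr_ge0.
apply: (psumr_eq0P Km_ge0) => //; apply/eqP; rewrite eq_le sumr_ge0 // andbT.
by rewrite sumrB sumr_const -mulr_natl subr_le0.
Qed.

End MinimumOfVector.

Section DistanceEquation.
Variables (R : realFieldType) (T : finType) (d : T -> T -> nat) (K : T -> R) (c : R).
Hypotheses (d_sym : forall x y, d x y = d y x)
  (d_triangle : forall x y z, (d x z <= d x y + d y z)%N)
  (K_ge0 : forall i, 0 <= K i)
  (dK : forall i, \sum_j (d i j)%:R * K j = c).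

Lemma dist_mul_sum_le u v : (d u v)%:R * \sum_j K j <= 2 * c.
Proof.
have -> : 2 * c = \sum_j (d u j + d v j)%N%:R * K j.
  rewrite (eq_bigr (fun j => (d u j)%:R * K j + (d v j)%:R * K j)) => [|j _].
    by rewrite big_split /= !dK mulrDl mul1r.
  by rewrite natrD mulrDl.
rewrite mulr_sumr ler_sum // => j _; rewrite ler_wpM2r // ler_nat -(d_sym j v).
exact: d_triangle.
Qed.

End DistanceEquation.

Theorem mainTheorem7 (R : realFieldType) (T : finType) (e : rel T)
  (Hsimple : simple_graph e) (Hconn : connected_graph e)
  (Hn : (2 <= #|T|)%N) (K : T -> R)
  (HKnn : forall i, 0 <= K i)
  (HDK : forall i, \sum_(j : T) (gdist e i j)%:R * K j = (#|T|)%:R) :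
  vmin K * (gdiam e)%:R <= 2 /\
  (vmin K = 2 / (gdiam e)%:R -> forall i, K i = 2 / (gdiam e)%:R).
Proof.
have [u [v diam_uv]] := gdiam_attained e (ltnW Hn).
have L_gt0 : (0 < gdiam e)%N.
  rewrite lt0n; apply/eqP => diam0; have := HDK u; rewrite big1 => [/eqP|j _].
    by rewrite eq_sym pnatr_eq0 eqn0Ngt (ltnW Hn).
  by move: (gdist_le_gdiam e u j); rewrite diam0 leqn0 => /eqP ->; rewrite mul0r.
have LS_le : (gdiam e)%:R * \sum_j K j <= 2 * #|T|%:R.
  rewrite diam_uv; apply: dist_mul_sum_le HKnn HDK _ _; last exact: gdist_triangle.
  by apply: gdist_sym; case: Hsimple.
have nm_le := card_mul_vmin_le_sum K.
have n_gt0 : 0 < #|T|%:R :> R by rewrite ltr0n ltnW.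
have L_gt0R : 0 < (gdiam e)%:R :> R by rewrite ltr0n.
split; first by nra.
move=> m_eq i; rewrite -m_eq; apply: eq_lower_bound_of_sum_le (vmin_le K) _ i.
have mL : vmin K * (gdiam e)%:R = 2 by rewrite m_eq mulfVK // gt_eqF.
by rewrite -(ler_pM2l L_gt0R); nra.
Qed.
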